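(* For a $c$-arc-colored digraph $G$ ($c\ge 2$), there exists a properly colored closed walk in $G$ traversing every arc of $G$ at least once if and only if $G$ is PC trail-connected.
   Context: A digraph $G$ is $c$-arc-colored if it comes with an arbitrary map $\phi:A(G)\to[c]$. Walks are directed. A walk $v_1\dots v_p$ is properly colored (PC) if $\phi(v_iv_{i+1})\ne\phi(v_{i+1}v_{i+2})$ for all $i\in[p-2]$ and, if the walk is closed, also its last and first arcs have different colors. A trail is a walk with no repeated arcs. $G$ is PC trail-connected if for every ordered pair of arcs $f_1,f_2$ of $G$ there is a PC trail whose first arc is $f_1$ and whose last arc is $f_2$. *)

From mathcomp Require Import all_boot.
Set Implicit Arguments. Unset Strict Implicit. Unset Printing Implicit Defensive.

(* A digraph on a finite vertex set V is an irreflexive relation E : rel V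
   (no loops, no parallel arcs); an arc is a pair (u,v) with E u v.
   A c-arc-coloring is a map phi : V -> V -> 'I_c (only its values on arcs
   matter). A walk v_1 ... v_p is given by its first vertex x and the rest p. *)

Section Walks.
Variables (V : finType) (E : rel V) (c : nat) (phi : V -> V -> 'I_c).

Definition is_arc (a : V * V) : bool := E a.1 a.2.

Definition is_walk (x : V) (p : seq V) : bool := path E x p.

Definition walk_arcs (x : V) (p : seq V) : seq (V * V) := zip (x :: p) p.

Definition walk_colors (x : V) (p : seq V) : seq 'I_c :=
  map (fun a => phi a.1 a.2) (walk_arcs x p).

Definition pc_walk (x : V) (p : seq V) : bool :=
  sorted (fun a b => a != b) (walk_colors x p).

Definition closed_walk (x : V) (p : seq V) : bool :=
  is_walk x p && (p != [::]) && (last x p == x).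

Definition pc_closed_walk (x : V) (p : seq V) : bool :=
  [&& closed_walk x p, pc_walk x p &
      (let cs := walk_colors x p in if cs is c0 :: cs' then c0 != last c0 cs' else false)]
  .
End Walks.

Definition trail (V : finType) (E : rel V) (x : V) (p : seq V) : bool :=
  is_walk E x p && uniq (walk_arcs x p).

Definition pc_trail_connected (V : finType) (E : rel V) (c : nat)
    (phi : V -> V -> 'I_c) : Prop :=
  forall f1 f2 : V * V, is_arc E f1 -> is_arc E f2 ->
    exists (x : V) (p : seq V),
      [/\ trail E x p, pc_walk phi x p,
          ohead (walk_arcs x p) = Some f1 &
          ohead (rev (walk_arcs x p)) = Some f2].

From mathcomp Require Import all_boot.
Set Implicit Arguments. Unset Strict Implicit. Unset Printing Implicit Defensive.

(* Record a walk by its sequence of arcs and let [pc_next a b] say that the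
   arc [b] starts where [a] ends and has another colour. PC walks are then the
   [pc_next]-paths of arcs and PC closed walks the [pc_next]-cycles, and a
   path can be shortened to a duplicate-free one, i.e. a PC trail; so PC
   trail-connectedness says that [pc_next] is strongly connected on the arcs.
   A cycle through all arcs connects any two of them. Conversely, if all arcs
   are mutually reachable, chaining paths from an arc [a] through every arc
   and back to [a] closes up into a cycle through all arcs, which is not the
   trivial one because there are two distinct arcs. *)

Section CoveringCycle.
Variables (T : finType) (e : rel T) (A : {pred T}).
Hypothesis connectA : {in A &, forall x y, connect e x y}.

Lemma connect_path_through a l : a \in A -> all [in A] l ->
  exists w, [/\ path e a w, last a w = last a l & {subset l <= a :: w}].
Proof.
elim: l a => [|b l IHl] a Aa /=; first by exists [::].
case/andP=> Ab Al; have /connectP[u e_au b_last] := connectA Aa Ab.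
have [w [e_bw last_w l_w]] := IHl b Ab Al.
exists (u ++ w); split; first by rewrite cat_path -b_last e_au.
  by rewrite last_cat -b_last last_w.
have b_au : b \in a :: u by rewrite b_last mem_last.
have bw_sub : {subset b :: w <= (a :: u) ++ w}.
  by move=> x; rewrite inE mem_cat => /predU1P[->|->]; rewrite ?b_au ?orbT.
by move=> x /predU1P[->|/l_w/bw_sub//]; rewrite bw_sub ?mem_head.
Qed.

Lemma connected_covering_cycle :
  1 < #|A| -> exists a s, cycle e (a :: s) /\ {subset A <= a :: s}.
Proof.
case/card_gt1P=> a [b [Aa Ab neq_ab]].
have Al : all [in A] (rcons (enum A) a).
  by rewrite all_rcons Aa; apply/allP=> x; rewrite mem_enum.
have [w [e_aw last_w Aw]] := connect_path_through Aa Al.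
have {}Aw x : x \in A -> x \in a :: w.
  by move=> Ax; apply: Aw; rewrite mem_rcons inE mem_enum Ax orbT.
rewrite last_rcons in last_w.
case/lastP: w e_aw last_w Aw => [|w x] e_aw last_w Aw.
  by have := Aw b Ab; rewrite inE eq_sym (negbTE neq_ab).
rewrite last_rcons in last_w; subst x.
exists a, w; split=> // x /Aw.
by rewrite !inE mem_rcons inE; case: (x == a).
Qed.

End CoveringCycle.

Lemma ohead_rev_cons (T : Type) (a : T) s : ohead (rev (a :: s)) = Some (last a s).
Proof. by rewrite lastI rev_rcons. Qed.

Section PCWalks.
Variables (V : finType) (E : rel V) (c : nat) (phi : V -> V -> 'I_c).

Definition pc_next (a b : V * V) : bool :=
  [&& is_arc E b, a.2 == b.1 & phi a.1 a.2 != phi b.1 b.2].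

Lemma walk_arcs_cons (x y : V) p : walk_arcs x (y :: p) = (x, y) :: walk_arcs y p.
Proof. by []. Qed.

Lemma path_walk_arcs x y p :
  path pc_next (x, y) (walk_arcs y p) = is_walk E y p && pc_walk phi x (y :: p).
Proof.
elim: p x y => [|z p IHp] x y //.
have -> : is_walk E y (z :: p) = is_arc E (y, z) && is_walk E z p by [].
have -> : pc_walk phi x [:: y, z & p] = (phi x y != phi y z) && pc_walk phi y (z :: p).
  by [].
rewrite walk_arcs_cons [path _ _ _]/= IHp /pc_next eqxx /= -!andbA.
by congr (_ && _); rewrite andbCA.
Qed.

Lemma last_walk_arcs (x y : V) p : (last (x, y) (walk_arcs y p)).2 = last y p.
Proof. by elim: p x y => //= z p IHp x y; apply: IHp. Qed.

Lemma pc_closed_walk_cycle x y p :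
  pc_closed_walk E phi x (y :: p) = cycle pc_next (walk_arcs x (y :: p)).
Proof.
rewrite /pc_closed_walk /closed_walk /= rcons_path path_walk_arcs -/(walk_arcs y p).
rewrite (last_map (fun a : V * V => phi a.1 a.2) _ (x, y)) /pc_next last_walk_arcs andbT.
rewrite [phi x y == _]eq_sym /is_arc /=.
by case: (E x y); case: (is_walk E y p); case: (pc_walk phi x (y :: p)); rewrite ?andbF.
Qed.

Lemma walk_arcs_of_path (a : V * V) s : path pc_next a s -> walk_arcs a.2 (map snd s) = s.
Proof.
elim: s a => [|b s IHs] a //= /andP[/and3P[_ /eqP ab _] /IHs].
by rewrite ab; case: b {ab} => u v /= /(congr1 (cons (u, v))).
Qed.

Lemma pc_trail_connectedP :
  pc_trail_connected E phi <->
  {in [pred a | is_arc E a] &, forall f1 f2, connect pc_next f1 f2}.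
Proof.
split=> conn f1 f2 Af1 Af2.
  have [x [[|y p] [/andP[walk_p _] pc_p]]] := conn f1 f2 Af1 Af2 => //.
  rewrite walk_arcs_cons ohead_rev_cons => -[<-] [<-].
  apply/connectP; exists (walk_arcs y p) => //.
  by rewrite path_walk_arcs pc_p andbT; case/andP: walk_p.
have /connectP[s path_s ->] := conn f1 f2 Af1 Af2.
case: (shortenP path_s) => {path_s}s path_s uniq_s _.
case: f1 Af1 path_s uniq_s => x y Axy path_s uniq_s.
have arcs_s := walk_arcs_of_path path_s.
exists x, (y :: map snd s); rewrite /trail walk_arcs_cons arcs_s.
have := path_s; rewrite -{1}arcs_s path_walk_arcs => /andP[walk_s pc_s].
by rewrite ohead_rev_cons uniq_s andbT; split=> //; apply/andP.
Qed.

End PCWalks.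

Theorem lemma1 (V : finType) (E : rel V) (c : nat) (phi : V -> V -> 'I_c) :
  irreflexive E -> 2 <= c ->
  1 < #|[pred a : V * V | is_arc E a]| ->
  (exists (x : V) (p : seq V),
      pc_closed_walk E phi x p /\
      forall a : V * V, is_arc E a -> a \in walk_arcs x p)
  <-> pc_trail_connected E phi.
Proof.
move=> _ _ two_arcs; split.
  case=> x [[|y p] [closed_p cover_p]] //; rewrite pc_closed_walk_cycle in closed_p.
  apply/pc_trail_connectedP => f1 f2 /cover_p f1_p /cover_p f2_p.
  exact: connect_cycle closed_p _ _ f1_p f2_p.
move/pc_trail_connectedP => conn.
have [[x y] [s [cycle_s cover_s]]] := connected_covering_cycle conn two_arcs.
have arcs_s : walk_arcs y (map snd s) = s.
  by move: cycle_s; rewrite /= rcons_path => /andP[/walk_arcs_of_path].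
exists x, (y :: map snd s); rewrite pc_closed_walk_cycle walk_arcs_cons arcs_s.
by split=> // f Af; apply: cover_s.
Qed.
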